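(* Let $s\ge r\ge 2$, let $Q$ be an $s$-vertex $r$-graph and let $H$ be an $n$-vertex $r$-graph ($n\ge s$) with $\mathcal N(Q,H)>0$. Then the function $$f_{Q,H}(p)=\left(\frac{\lambda^{(p)}(Q,H)}{s!\,\mathcal N(Q,H)}\right)^{p}$$ is non-increasing on $[1,\infty)$.
   Context: An $r$-graph ($r\ge 2$) is a finite hypergraph all of whose edges have exactly $r$ vertices. For $I\subseteq V(H)$, $H[I]$ denotes the induced subhypergraph on $I$. For an $s$-vertex $r$-graph $Q$ and an $r$-graph $H$, $\mathcal N(Q,H)$ is the number of (not necessarily induced) subgraphs of $H$ isomorphic to $Q$. For an $n$-vertex $r$-graph $H$ with vertex set $[n]$ and $\mathbf x\in\mathbb R^n$, $P_{Q,H}(\mathbf x)=s!\sum_{\{i_1,\dots,i_s\}\in\binom{[n]}{s}}\mathcal N(Q,H[\{i_1,\dots,i_s\}])\,x_{i_1}\cdots x_{i_s}$, and for $p\ge1$, $\lambda^{(p)}(Q,H)=\max_{\|\mathbf x\|_p=1}P_{Q,H}(\mathbf x)$. *)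

From HB Require Import structures.
From mathcomp Require Import all_boot all_order all_algebra.
From mathcomp Require Import all_classical all_reals all_analysis.
Set Implicit Arguments. Unset Strict Implicit. Unset Printing Implicit Defensive.
Import Order.TTheory GRing.Theory Num.Theory.
Local Open Scope ring_scope.

Definition is_rgraph (r m : nat) (E : {set {set 'I_m}}) : Prop :=
  forall e, e \in E -> #|e| = r.

Definition copy_of (s n : nat) (EQ : {set {set 'I_s}}) (phi : {ffun 'I_s -> 'I_n})
  : {set 'I_n} * {set {set 'I_n}} :=
  (phi @: [set: 'I_s], [set (phi @: (e : {set 'I_s})) | e in EQ]).

(* Number of (not necessarily induced) subgraphs of the host hypergraph with
   vertex set V and edge set EH that are isomorphic to Q = ('I_s, EQ):
   the number of distinct pairs (vertex set, edge set) arising as images of Q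
   under injective maps phi whose vertex image lies in V and which send every
   edge of Q to an edge of the host. *)
Definition Ncopies (s n : nat) (EQ : {set {set 'I_s}})
  (V : {set 'I_n}) (EH : {set {set 'I_n}}) : nat :=
  #|[set copy_of EQ phi | phi : {ffun 'I_s -> 'I_n} &
      [&& injectiveb phi, phi @: [set: 'I_s] \subset V &
          [forall e in EQ, (phi @: e) \in EH]]]|.

Definition NQH (s n : nat) (EQ : {set {set 'I_s}}) (EH : {set {set 'I_n}}) : nat :=
  Ncopies EQ [set: 'I_n] EH.

Definition induced_edges (n : nat) (EH : {set {set 'I_n}}) (I : {set 'I_n}) :=
  [set e in EH | e \subset I].

Definition PQH {R : realType} (s n : nat) (EQ : {set {set 'I_s}})
  (EH : {set {set 'I_n}}) (x : 'I_n -> R) : R :=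
  (s`!)%:R * \sum_(I : {set 'I_n} | #|I| == s)
     (Ncopies EQ I (induced_edges EH I))%:R * \prod_(i in I) x i.

Definition pnorm {R : realType} (n : nat) (p : R) (x : 'I_n -> R) : R :=
  (\sum_(i < n) `|x i| `^ p) `^ p^-1.

(* lambda^(p)(Q,H) = max_{||x||_p = 1} P_{Q,H}(x)  (the max is attained, by
   compactness; we take the supremum of the set of values). *)
Definition lambdaQH {R : realType} (s n : nat) (EQ : {set {set 'I_s}})
  (EH : {set {set 'I_n}}) (p : R) : R :=
  sup [set y | exists x : 'I_n -> R, pnorm p x = 1 /\ y = PQH EQ EH x]%classic.

Definition fQH {R : realType} (s n : nat) (EQ : {set {set 'I_s}})
  (EH : {set {set 'I_n}}) (p : R) : R :=
  (lambdaQH EQ EH p / ((s`!)%:R * (NQH EQ EH)%:R)) `^ p.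

From HB Require Import structures.
From mathcomp Require Import all_boot all_order all_algebra.
From mathcomp Require Import all_classical all_reals all_analysis.
From mathcomp Require Import ring lra.
Set Implicit Arguments. Unset Strict Implicit. Unset Printing Implicit Defensive.
Import Order.TTheory GRing.Theory Num.Theory.
Local Open Scope ring_scope.

(* For 1 <= p <= q put a := q/p.  If ||x||_q = 1 then y := |x|^a satisfies
   ||y||_p = 1.  Writing P_{Q,H}(x) = s! sum_I w_I prod_{i in I} x_i with
   weights w_I = N(Q,H[I]) whose total is at most N(Q,H), Jensen's inequality
   for the convex map t |-> t^a gives
     s! N(Q,H) (P(|x|) / (s! N(Q,H)))^a <= P(y) <= lambda^(p).
   Taking the supremum over x and raising to the power q yields
   f(q) <= f(p). *)

Section PowRInequalities.
Variable R : realType.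

Lemma powR_tangent_le (a m z : R) : 1 <= a -> 0 < m -> 0 <= z ->
  m `^ a + a * m `^ (a - 1) * (z - m) <= z `^ a.
Proof.
move=> a1 m0 z0.
have a0 : 0 < a by apply: lt_le_trans a1.
have mm : m * m `^ (a - 1) = m `^ a by rewrite mulr_powRB1 // ltW.
have [->|an1] := eqVneq a 1.
  by rewrite subrr powRr0 (powRr1 (ltW m0)) (powRr1 z0); lra.
have am0 : 0 < a - 1 by rewrite subr_gt0 lt_neqAle eq_sym an1.
pose b := a / (a - 1).
have b0 : 0 < b by rewrite divr_gt0.
have conj_ab : a^-1 + b^-1 = 1 by rewrite /b invf_div; field; rewrite gt_eqF.
(* Young's inequality with the conjugate exponents a and a/(a-1). *)
have young := conjugate_powR z0 (powR_ge0 m (a - 1)) a0 b0 conj_ab.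
rewrite -powRrM [(a - 1) * b]mulrCA mulfV ?gt_eqF // mulr1 in young.
have young' : a * (z * m `^ (a - 1)) <= z `^ a + (a - 1) * m `^ a.
  have -> : z `^ a + (a - 1) * m `^ a = a * (z `^ a / a + m `^ a / b).
    by rewrite /b; field; rewrite !gt_eqF.
  by rewrite ler_wpM2l // ltW.
rewrite -mm in young' *.
have := powR_ge0 m (a - 1); move: young'; move: (m `^ (a - 1)) => u; nra.
Qed.

Lemma jensen_powR (I : finType) (P : pred I) (w z : I -> R) (N a : R) :
  1 <= a -> 0 < N -> (forall i, 0 <= w i) -> (forall i, 0 <= z i) ->
  \sum_(i | P i) w i <= N ->
  N * ((\sum_(i | P i) w i * z i) / N) `^ a <= \sum_(i | P i) w i * z i `^ a.
Proof.
move=> a1 N0 w0 z0 WN.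
set S := \sum_(i | P i) w i * z i; set W := \sum_(i | P i) w i.
have [S0|S0] := eqVneq S 0.
  rewrite S0 mul0r powR0 ?mulr0; last by rewrite gt_eqF // (lt_le_trans _ a1).
  by apply: sumr_ge0 => i _; rewrite mulr_ge0 // powR_ge0.
have S_gt0 : 0 < S.
  by rewrite lt_neqAle eq_sym S0 sumr_ge0 // => i _; rewrite mulr_ge0.
set m := S / N.
have m0 : 0 < m by rewrite divr_gt0.
apply: le_trans (_ : \sum_(i | P i) w i * (m `^ a + a * m `^ (a - 1) * (z i - m))
                     <= _); last first.
  by apply: ler_sum => i _; apply/ler_wpM2l/powR_tangent_le.
have mm : m * m `^ (a - 1) = m `^ a by rewrite mulr_powRB1 ?(lt_le_trans _ a1) ?ltW.
have SN : S = N * m by rewrite /m mulrC divfK // gt_eqF.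
have -> : \sum_(i | P i) w i * (m `^ a + a * m `^ (a - 1) * (z i - m))
    = (1 - a) * m `^ a * W + a * N * m `^ a.
  rewrite -mm; have -> : a * N * (m * m `^ (a - 1)) = a * m `^ (a - 1) * S.
    by rewrite SN; ring.
  by rewrite /W /S !mulr_sumr -big_split /=; apply: eq_bigr => i _; ring.
have := powR_ge0 m a; have : 0 <= (a - 1) * (N - W) by rewrite mulr_ge0 ?subr_ge0.
by move: (m `^ a) => t; clearbody W; nra.
Qed.

Lemma prodr_powR (I : finType) (P : pred I) (F : I -> R) (a : R) :
  (forall i, 0 <= F i) ->
  \prod_(i | P i) F i `^ a = (\prod_(i | P i) F i) `^ a.
Proof.
move=> F0.
suff [] : 0 <= \prod_(i | P i) F i /\
          \prod_(i | P i) F i `^ a = (\prod_(i | P i) F i) `^ a by [].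
apply: (big_rec2 (fun y1 y2 => 0 <= y2 /\ y1 = y2 `^ a)) => [|i y1 y2 _ [y20 ->]].
  by rewrite powR1.
by rewrite mulr_ge0 // powRM.
Qed.

Lemma le_powR_inv (t u a : R) : 0 < a -> 0 <= t -> t `^ a <= u -> t <= u `^ a^-1.
Proof.
move=> a0 t0 tu.
rewrite -{1}(powRr1 t0) -(mulfV (lt0r_neq0 a0)) powRrM.
have u0 : 0 <= u by apply: le_trans tu; apply: powR_ge0.
by apply: ge0_ler_powR tu; rewrite ?nnegrE ?invr_ge0 ?powR_ge0 // ltW.
Qed.

Lemma powR_le_powR_div (u v p q : R) : 0 < q -> 0 <= u -> u <= v `^ (p / q) ->
  u `^ q <= v `^ p.
Proof.
move=> q0 u0 uv.
rewrite -[p in v `^ p](divfK (lt0r_neq0 q0)) powRrM.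
by apply: ge0_ler_powR uv; rewrite ?nnegrE ?powR_ge0 // ltW.
Qed.

End PowRInequalities.

Section PNorm.
Variables (R : realType) (n : nat).
Implicit Types (p q : R) (x : 'I_n -> R).

Lemma pnorm_eq1_sum p x : 0 < p -> pnorm p x = 1 -> \sum_(i < n) `|x i| `^ p = 1.
Proof.
rewrite /pnorm => p0 h.
have T0 : 0 <= \sum_(i < n) `|x i| `^ p by apply: sumr_ge0 => i _; exact: powR_ge0.
by rewrite -(powRr1 T0) -{1}(mulVf (lt0r_neq0 p0)) powRrM h powR1.
Qed.

Lemma pnorm_eq1_normr_le1 p x i : 0 < p -> pnorm p x = 1 -> `|x i| <= 1.
Proof.
move=> p0 /(pnorm_eq1_sum p0) S1.
have : `|x i| `^ p <= 1.
  rewrite -S1 (bigD1 i) //= lerDl; apply: sumr_ge0 => j _; exact: powR_ge0.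
apply: contraTle => lt1.
by have := gt0_ltr_powR p0 ler01 (normr_ge0 (x i)) lt1; rewrite powR1 ltNge.
Qed.

Lemma pnorm_delta p (i0 : 'I_n) : 0 < p -> pnorm p (fun i => (i == i0)%:R) = 1.
Proof.
move=> p0; rewrite /pnorm (bigD1 i0) //= big1 => [|i /negbTE->].
  by rewrite eqxx normr1 powR1 addr0 powR1.
by rewrite normr0 powR0 // gt_eqF.
Qed.

Lemma pnorm_powR_normr p q x : 0 < p -> 0 < q -> pnorm q x = 1 ->
  pnorm p (fun i => `|x i| `^ (q / p)) = 1.
Proof.
move=> p0 q0 /(pnorm_eq1_sum q0) Sq; rewrite /pnorm.
under eq_bigr do rewrite ger0_norm ?powR_ge0 // -powRrM divfK ?gt_eqF //.
by rewrite Sq powR1.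
Qed.

End PNorm.

Lemma sum_Ncopies_le_NQH (s n : nat) (EQ : {set {set 'I_s}}) (EH : {set {set 'I_n}}) :
  (\sum_(I : {set 'I_n} | #|I| == s) Ncopies EQ I (induced_edges EH I)
     <= NQH EQ EH)%N.
Proof.
rewrite /NQH /Ncopies.
set S := [set copy_of EQ phi | phi : {ffun 'I_s -> 'I_n} & _].
(* Each copy of Q in H[I] is a copy in H whose vertex set is I. *)
rewrite -sum1_card (partition_big (fun c => c.1) predT) //=.
apply: (@leq_trans (\sum_(I : {set 'I_n} | #|I| == s)
     \sum_(c | (c \in S) && (c.1 == I)) 1)).
  apply: leq_sum => I /eqP cardI.
  rewrite sum1dep_card; apply/subset_leq_card/fintype.subsetP => c.
  case/imsetP => phi; rewrite !inE => /and3P[inj sub edges] ->.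
  apply/andP; split.
    apply/imsetP; exists phi => //; rewrite !inE inj finset.subsetT /=.
    apply/forall_inP => e eE.
    by move/forall_inP: edges => /(_ e eE); rewrite !inE => /andP[].
  rewrite /= eqEcard sub cardI card_imset ?cardsT ?card_ord //=.
  exact/injectiveP.
by rewrite [leqRHS](bigID (fun I : {set 'I_n} => #|I| == s)) leq_addr.
Qed.

Section Lagrangian.
Variables (R : realType) (s n : nat) (EQ : {set {set 'I_s}}) (EH : {set {set 'I_n}}).
Implicit Types (p q a : R) (x : 'I_n -> R).

Let P := @PQH R s n EQ EH.
Let lambda := @lambdaQH R s n EQ EH.
Let c : R := (s`!)%:R.
Let N : R := (NQH EQ EH)%:R.
Let w (I : {set 'I_n}) : R := (Ncopies EQ I (induced_edges EH I))%:R.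

Lemma PQH_ge0 x : (forall i, 0 <= x i) -> 0 <= P x.
Proof.
move=> x0; rewrite mulr_ge0 // sumr_ge0 // => I _.
by rewrite mulr_ge0 // prodr_ge0.
Qed.

Lemma PQH_le_normr x : P x <= P (fun i => `|x i|).
Proof.
apply: le_trans (ler_norm _) _.
rewrite normrM ger0_norm // ler_wpM2l //.
apply: le_trans (ler_norm_sum _ _ _) _.
by apply: ler_sum => I _; rewrite normrM ger0_norm // normr_prod.
Qed.

Lemma PQH_le_weights p x : 0 < p -> pnorm p x = 1 ->
  P x <= c * \sum_(I : {set 'I_n} | #|I| == s) w I.
Proof.
move=> p0 hx; apply: le_trans (PQH_le_normr x) _.
rewrite ler_wpM2l // ler_sum // => I _.
rewrite ler_piMr // prodr_ile1 // => i _.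
by rewrite normr_ge0 (pnorm_eq1_normr_le1 _ p0 hx).
Qed.

Lemma PQH_values_bounded p : 0 < p ->
  has_ubound [set y | exists x : 'I_n -> R, pnorm p x = 1 /\ y = P x]%classic.
Proof.
by move=> p0; exists (c * \sum_(I : {set 'I_n} | #|I| == s) w I) => y [x [hx ->]];
  exact: PQH_le_weights hx.
Qed.

Lemma PQH_le_lambdaQH p x : 0 < p -> pnorm p x = 1 -> P x <= lambda p.
Proof. by move=> p0 hx; apply: ub_le_sup (PQH_values_bounded p0) _ _; exists x. Qed.

Lemma lambdaQH_ge0 p : (0 < n)%N -> 0 < p -> 0 <= lambda p.
Proof.
move=> n0 p0; have := pnorm_delta (Ordinal n0) p0.
by move/(PQH_le_lambdaQH p0); apply: le_trans; apply: PQH_ge0 => i; rewrite ler0n.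
Qed.

Hypothesis NQH_gt0 : (0 < NQH EQ EH)%N.

Let c_gt0 : 0 < c. Proof. by rewrite ltr0n fact_gt0. Qed.
Let N_gt0 : 0 < N. Proof. by rewrite ltr0n. Qed.

Lemma PQH_jensen a x : 1 <= a -> (forall i, 0 <= x i) ->
  c * N * (P x / (c * N)) `^ a <= P (fun i => x i `^ a).
Proof.
move=> a1 x0.
pose z (I : {set 'I_n}) := \prod_(i in I) x i.
have weights_le : \sum_(I : {set 'I_n} | #|I| == s) w I <= N.
  by rewrite -natr_sum ler_nat sum_Ncopies_le_NQH.
have Px_a : P (fun i => x i `^ a) = c * \sum_(I : {set 'I_n} | #|I| == s) w I * z I `^ a.
  by rewrite /P /PQH; under eq_bigr do rewrite prodr_powR //.
rewrite Px_a /P /PQH -/c invfM mulrACA mulfV ?gt_eqF // mul1r -mulrA ler_pM2l //.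
have z0 I : 0 <= z I by apply: prodr_ge0 => i _.
exact: jensen_powR a1 N_gt0 (fun I => ler0n _ _) z0 weights_le.
Qed.

Lemma lambdaQH_le_powR p q : (0 < n)%N -> 1 <= p -> p <= q ->
  lambda q / (c * N) <= (lambda p / (c * N)) `^ (p / q).
Proof.
move=> n0 p1 pq.
have p0 : 0 < p by apply: lt_le_trans p1.
have q0 : 0 < q by apply: lt_le_trans pq.
have a1 : 1 <= q / p by rewrite ler_pdivlMr // mul1r.
have cN0 := mulr_gt0 c_gt0 N_gt0.
suff Px_le x : pnorm q x = 1 -> P x / (c * N) <= (lambda p / (c * N)) `^ (p / q).
  rewrite ler_pdivrMr //; apply: ge_sup => [|_ [x [hx ->]]].
    by exists (P (fun i => (i == Ordinal n0)%:R)), (fun i => (i == Ordinal n0)%:R);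
      rewrite pnorm_delta.
  by rewrite -ler_pdivrMr // Px_le.
move=> hx.
have Pabs_le : P (fun i => `|x i|) / (c * N) <= (lambda p / (c * N)) `^ (p / q).
  rewrite -[p / q]invf_div; apply: le_powR_inv.
  - exact: lt_le_trans a1.
  - by apply: divr_ge0 (PQH_ge0 _) (ltW cN0).
  rewrite ler_pdivlMr // mulrC.
  apply: le_trans (PQH_le_lambdaQH p0 (pnorm_powR_normr p0 q0 hx)).
  exact: PQH_jensen.
by apply: le_trans Pabs_le; rewrite ler_pM2r ?invr_gt0 // PQH_le_normr.
Qed.

End Lagrangian.

Theorem lemma2p2 (R : realType) (r s n : nat)
  (EQ : {set {set 'I_s}}) (EH : {set {set 'I_n}}) :
  (2 <= r)%N -> (r <= s)%N -> (s <= n)%N ->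
  is_rgraph r EQ -> is_rgraph r EH ->
  (0 < NQH EQ EH)%N ->
  forall p q : R, 1 <= p -> p <= q -> fQH EQ EH q <= fQH EQ EH p.
Proof.
move=> r2 rs sn _ _ N0 p q p1 pq.
have n0 : (0 < n)%N := leq_trans (leq_trans (ltnW r2) rs) sn.
have p0 : 0 < p by apply: lt_le_trans p1.
have cN0 : 0 < (s`!)%:R * (NQH EQ EH)%:R :> R by rewrite mulr_gt0 ?ltr0n ?fact_gt0.
apply: powR_le_powR_div (lt_le_trans p0 pq) _ (lambdaQH_le_powR N0 n0 p1 pq).
by rewrite divr_ge0 ?(ltW cN0) // lambdaQH_ge0 // (lt_le_trans p0 pq).
Qed.
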